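(* Consider the two-dimensional Grover walk on $\mathbb{Z}^2$ with a four-level coin, whose real amplitudes $\alpha_{x,y,c'}(t)$ ($x,y\in\mathbb{Z}$, $c'\in\{0,1,2,3\}$, $t\in\mathbb{Z}_{\ge 0}$) evolve by \[ \alpha_{x,y,0}(t+1)=\sum_{j=0}^3 G_{0j}\alpha_{x+1,y+1,j}(t),\quad \alpha_{x,y,1}(t+1)=\sum_{j=0}^3 G_{1j}\alpha_{x+1,y-1,j}(t), \] \[ \alpha_{x,y,2}(t+1)=\sum_{j=0}^3 G_{2j}\alpha_{x-1,y+1,j}(t),\quad \alpha_{x,y,3}(t+1)=\sum_{j=0}^3 G_{3j}\alpha_{x-1,y-1,j}(t), \] where $G=(G_{ij})_{i,j=0}^3=\frac12\begin{pmatrix}-1&1&1&1\\1&-1&1&1\\1&1&-1&1\\1&1&1&-1\end{pmatrix}$. Suppose the walker starts at the origin with initial amplitudes $\alpha_{0,0,0}(0)=1/2$, $\alpha_{0,0,1}(0)=-1/2$, $\alpha_{0,0,2}(0)=-1/2$, $\alpha_{0,0,3}(0)=1/2$, and $\alpha_{x,y,c'}(0)=0$ for $(x,y)\neq(0,0)$. Then for all $t\ge 0$ and all $(x,y)\in\mathbb{Z}^2$, \[ \alpha_{x-1,y,0}(t)+\alpha_{x-1,y,1}(t)+\alpha_{x+1,y,2}(t)+\alpha_{x+1,y,3}(t)=0, \] \[ \alpha_{x,y-1,0}(t)+\alpha_{x,y-1,2}(t)+\alpha_{x,y+1,1}(t)+\alpha_{x,y+1,3}(t)=0. \]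
   Context: The Grover walk state at time $t$ is $\sum_{x,y,c'}\alpha_{x,y,c'}(t)|x,y\rangle\otimes|c'\rangle$; one time step applies the Grover coin $G$ to the coin and then moves the walker according to the coin state: $|0\rangle$ left-down $(x-1,y-1)$, $|1\rangle$ left-up $(x-1,y+1)$, $|2\rangle$ right-down $(x+1,y-1)$, $|3\rangle$ right-up $(x+1,y+1)$; this is equivalent to the recursions stated. *)

From HB Require Import structures.
From mathcomp Require Import all_boot all_order all_algebra.
Set Implicit Arguments. Unset Strict Implicit. Unset Printing Implicit Defensive.
Import Order.TTheory GRing.Theory Num.Theory.
Local Open Scope ring_scope.

Definition c0 : 'I_4 := @Ordinal 4 0 isT.
Definition c1 : 'I_4 := @Ordinal 4 1 isT.
Definition c2 : 'I_4 := @Ordinal 4 2 isT.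
Definition c3 : 'I_4 := @Ordinal 4 3 isT.

Definition Grover (R : fieldType) : 'M[R]_4 :=
  \matrix_(i < 4, j < 4) ((if i == j then -1 else 1) / 2%:R).

Definition grover_walk (R : fieldType) (alpha : nat -> int -> int -> 'I_4 -> R) :=
  forall (t : nat) (x y : int),
    [/\ alpha t.+1 x y c0 = \sum_(j < 4) Grover R c0 j * alpha t (x + 1) (y + 1) j,
        alpha t.+1 x y c1 = \sum_(j < 4) Grover R c1 j * alpha t (x + 1) (y - 1) j,
        alpha t.+1 x y c2 = \sum_(j < 4) Grover R c2 j * alpha t (x - 1) (y + 1) j &
        alpha t.+1 x y c3 = \sum_(j < 4) Grover R c3 j * alpha t (x - 1) (y - 1) j].

From HB Require Import structures.
From mathcomp Require Import all_boot all_order all_algebra.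
From mathcomp Require Import zify ring.

Set Implicit Arguments.
Unset Strict Implicit.
Unset Printing Implicit Defensive.
Import Order.TTheory GRing.Theory Num.Theory.
Local Open Scope ring_scope.

(* One step of the walk exchanges the two sums: the horizontal sum at time
   t+1 equals the vertical sum at time t, and conversely.  This is because
   each Grover row maps the coin vector v to (v0+v1+v2+v3)/2 - v_c, and the
   four averages occurring in one sum cancel pairwise.  The initial state is
   supported at the origin with c0 + c1 = c2 + c3 = c0 + c2 = c1 + c3 = 0,
   so both sums vanish at t = 0. *)

Definition hsum {V : nmodType} (a : int -> int -> 'I_4 -> V) (x y : int) : V :=
  a (x - 1) y c0 + a (x - 1) y c1 + a (x + 1) y c2 + a (x + 1) y c3.

Definition vsum {V : nmodType} (a : int -> int -> 'I_4 -> V) (x y : int) : V :=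
  a x (y - 1) c0 + a x (y - 1) c2 + a x (y + 1) c1 + a x (y + 1) c3.

Lemma Grover_rowE (R : numFieldType) (c : 'I_4) (f : 'I_4 -> R) :
  \sum_(j < 4) Grover R c j * f j = (f c0 + f c1 + f c2 + f c3) / 2%:R - f c.
Proof.
rewrite !big_ord_recr big_ord0 /= !mxE.
have -> : widen_ord (leqnSn 3) (widen_ord (leqnSn 2) (widen_ord (leqnSn 1) ord_max)) = c0
  by exact: val_inj.
have -> : widen_ord (leqnSn 3) (widen_ord (leqnSn 2) ord_max) = c1 by exact: val_inj.
have -> : widen_ord (leqnSn 3) ord_max = c2 by exact: val_inj.
have -> : ord_max = c3 by exact: val_inj.
case: c => [[|[|[|[|//]]]] i] /=.
all: by rewrite (bool_irrelevance i isT) -/c0 -/c1 -/c2 -/c3; field.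
Qed.

Section GroverStep.
Variables (R : numFieldType) (alpha : nat -> int -> int -> 'I_4 -> R).
Hypothesis walk : grover_walk alpha.

Lemma hsum_step t (x y : int) : hsum (alpha t.+1) x y = vsum (alpha t) x y.
Proof.
rewrite /hsum /vsum.
case: (walk t (x - 1) y) => -> -> _ _.
case: (walk t (x + 1) y) => _ _ -> ->.
by rewrite !Grover_rowE !subrK !addrK; field.
Qed.

Lemma vsum_step t (x y : int) : vsum (alpha t.+1) x y = hsum (alpha t) x y.
Proof.
rewrite /hsum /vsum.
case: (walk t x (y - 1)) => -> _ -> _.
case: (walk t x (y + 1)) => _ -> _ ->.
by rewrite !Grover_rowE !subrK !addrK; field.
Qed.

End GroverStep.

Section OriginState.
Variables (V : nmodType) (a : int -> int -> 'I_4 -> V).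
Hypothesis supp0 : forall x y c, (x, y) != (0, 0) -> a x y c = 0.

Let a_off x y c : (x != 0) || (y != 0) -> a x y c = 0.
Proof. by move=> nz; apply: supp0; rewrite xpair_eqE negb_and. Qed.

Lemma hsum_origin (x y : int) :
  a 0 0 c0 + a 0 0 c1 = 0 -> a 0 0 c2 + a 0 0 c3 = 0 -> hsum a x y = 0.
Proof.
move=> e01 e23; rewrite /hsum.
have [->|y0] := eqVneq y 0; last by rewrite !a_off ?y0 ?orbT ?addr0.
have [->|x1] := eqVneq x 1.
  by rewrite subrr e01 ![a (1 + 1) _ _]a_off ?addr0.
have [->|xN1] := eqVneq x (-1).
  by rewrite addNr -addrA e23 ![a (-1 - 1) _ _]a_off ?add0r.
by rewrite !a_off ?addr0 //; lia.
Qed.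

Lemma vsum_origin (x y : int) :
  a 0 0 c0 + a 0 0 c2 = 0 -> a 0 0 c1 + a 0 0 c3 = 0 -> vsum a x y = 0.
Proof.
move=> e02 e13; rewrite /vsum.
have [->|x0] := eqVneq x 0; last by rewrite !a_off ?x0 ?addr0.
have [->|y1] := eqVneq y 1.
  by rewrite subrr e02 ![a _ (1 + 1) _]a_off ?orbT ?addr0.
have [->|yN1] := eqVneq y (-1).
  by rewrite addNr -addrA e13 ![a _ (-1 - 1) _]a_off ?orbT ?add0r.
by rewrite !a_off ?orbT ?addr0 //; lia.
Qed.

End OriginState.

Theorem lemma1 (R : realFieldType) (alpha : nat -> int -> int -> 'I_4 -> R) :
  grover_walk alpha ->
  alpha 0%N 0 0 c0 = 1 / 2%:R ->
  alpha 0%N 0 0 c1 = - (1 / 2%:R) ->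
  alpha 0%N 0 0 c2 = - (1 / 2%:R) ->
  alpha 0%N 0 0 c3 = 1 / 2%:R ->
  (forall (x y : int) (c : 'I_4), (x, y) != (0, 0) -> alpha 0%N x y c = 0) ->
  forall (t : nat) (x y : int),
    alpha t (x - 1) y c0 + alpha t (x - 1) y c1
      + alpha t (x + 1) y c2 + alpha t (x + 1) y c3 = 0 /\
    alpha t x (y - 1) c0 + alpha t x (y - 1) c2
      + alpha t x (y + 1) c1 + alpha t x (y + 1) c3 = 0.
Proof.
move=> walk a0 a1 a2 a3 supp0 t.
suff : forall x y, hsum (alpha t) x y = 0 /\ vsum (alpha t) x y = 0 by [].
elim: t => [|t IH] x y.
  by split; [apply: hsum_origin | apply: vsum_origin];
    rewrite // ?a0 ?a1 ?a2 ?a3 (addrN, addNr).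
rewrite (hsum_step walk) (vsum_step walk).
by have [-> ->] := IH x y.
Qed.
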